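(* Let $H$ be a graph obtained from a path $w_1w_2\cdots w_7$ by adding the edges of a matching $M$ on $\{w_1,\dots,w_7\}$. Then $H$ has a stable set $S$ with $|S|=3$ and $\{w_1,w_7\}\setminus S\neq\emptyset$.
   Context: A matching is a set of pairwise disjoint edges. A stable set is a set of pairwise non-adjacent vertices. Graphs are simple. *)

(* Vertices w_1..w_7 are the ordinals 0..6 of 'I_7. *)
From mathcomp Require Import all_boot.
Set Implicit Arguments. Unset Strict Implicit. Unset Printing Implicit Defensive.

Definition path_edge (x y : 'I_7) : bool := (x.+1 == y) || (y.+1 == x).

Definition is_matching (M : {set {set 'I_7}}) : Prop :=
  (forall e, e \in M -> #|e| = 2) /\ trivIset M.

Definition H_adj (M : {set {set 'I_7}}) (x y : 'I_7) : bool :=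
  (x != y) && (path_edge x y || ([set x; y] \in M)).

Definition stable (M : {set {set 'I_7}}) (S : {set 'I_7}) : Prop :=
  forall x y, x \in S -> y \in S -> ~~ H_adj M x y.

Definition w1 : 'I_7 := @Ordinal 7 0 isT.
Definition w7 : 'I_7 := @Ordinal 7 6 isT.

(** Only the seven 3-element stable sets of the path that do not contain both
    ends matter.  Each pair of vertices lies in at most two of them, and a
    matching on seven vertices has at most three edges, so the edges of [M]
    spoil at most six of these seven sets. *)

From mathcomp Require Import all_boot zify.
Set Implicit Arguments. Unset Strict Implicit. Unset Printing Implicit Defensive.

Lemma count_exists_le_sum (I : finType) (T : Type) (P : {pred I})
    (Q : I -> pred T) (s : seq T) :
  count (fun x => [exists i in P, Q i x]) s <= \sum_(i in P) count (Q i) s.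
Proof.
elim: s => [|x s IHs] /=; first by rewrite big1.
rewrite big_split /= leq_add //; case: exists_inP => // -[i Pi Qix].
by rewrite (bigD1 i) //= Qix.
Qed.

Lemma exists_unblocked (T : finType) (C : seq {set T}) (M : {set {set T}})
    (k : nat) :
  (forall e, e \in M -> count (fun A : {set T} => e \subset A) C <= k) ->
  k * #|M| < size C ->
  exists2 A, A \in C & forall e, e \in M -> ~~ (e \subset A).
Proof.
move=> few_above lt_C.
suff /hasP [A AC /forall_inP free] :
  has (fun A : {set T} => [forall e in M, ~~ (e \subset A)]) C by exists A.
apply: contraLR lt_C => /hasPn all_blocked; rewrite -leqNgt.
have <- : count (fun A : {set T} => [exists e in M, e \subset A]) C = size C.
  apply/eqP; rewrite -all_count; apply/allP => A /all_blocked.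
  by rewrite negb_forall_in; under eq_existsb do rewrite negbK.
apply: leq_trans (count_exists_le_sum _ _ _) _.
by rewrite mulnC -sum_nat_const leq_sum.
Qed.

Lemma card_matching (T : finType) (M : {set {set T}}) :
  (forall e, e \in M -> #|e| = 2) -> trivIset M -> 2 * #|M| <= #|T|.
Proof.
move=> card_e /eqP sum_cover.
rewrite mulnC -sum_nat_const -(eq_bigr _ card_e) sum_cover.
exact: max_card.
Qed.

Definition ordset (n : nat) (s : seq nat) : {set 'I_n} :=
  [set x : 'I_n | (x : nat) \in s].

Lemma card_ordset n s : #|ordset n s| = count (mem s) (iota 0 n).
Proof.
rewrite cardE /enum_mem size_filter -val_enum_ord count_map enumT.
by apply: eq_count => x; rewrite !inE.
Qed.

Lemma stable_of_edge_free (M : {set {set 'I_7}}) (S : {set 'I_7}) :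
  {in S &, forall x y, ~~ path_edge x y} ->
  (forall e, e \in M -> ~~ (e \subset S)) -> stable M S.
Proof.
move=> path_free M_free x y xS yS; rewrite /H_adj (negbTE (path_free x y xS yS)).
apply/negP => /andP [_ xyM].
by move: (M_free _ xyM); rewrite subUset !sub1set xS yS.
Qed.

Definition path_triples : seq (seq nat) :=
  [:: [:: 0; 2; 4]; [:: 0; 2; 5]; [:: 0; 3; 5]; [:: 1; 3; 5];
      [:: 1; 3; 6]; [:: 1; 4; 6]; [:: 2; 4; 6]].

Lemma card_path_triple t : t \in path_triples -> #|ordset 7 t| = 3.
Proof.
have /allP three : all (fun t => count (mem t) (iota 0 7) == 3) path_triples by [].
by move=> /three /eqP; rewrite card_ordset.
Qed.

Lemma path_triple_edge_free t :
  t \in path_triples -> {in ordset 7 t &, forall x y, ~~ path_edge x y}.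
Proof.
have /allP edge_free : all (fun t => all (fun a => all (fun b =>
    ~~ ((a.+1 == b) || (b.+1 == a))) t) t) path_triples by [].
move=> /edge_free /allP t_ok x y; rewrite !inE => /t_ok /allP; exact.
Qed.

Lemma path_triple_misses_end t :
  t \in path_triples -> [set w1; w7] :\: ordset 7 t != set0.
Proof.
have /allP misses : all (fun t => (0 \notin t) || (6 \notin t)) path_triples by [].
move=> /misses /orP end_t; apply/set0Pn; case: end_t => end_t.
- by exists w1; rewrite !inE eqxx end_t.
- by exists w7; rewrite !inE eqxx orbT end_t.
Qed.

Lemma count_path_triples_above_pair (x y : 'I_7) : x != y ->
  count (fun S : {set 'I_7} => [set x; y] \subset S) (map (ordset 7) path_triples)
    <= 2.
Proof.
have /allP pairs_ok : all (fun a => all (fun b =>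
    (a != b) ==> (count (fun t => (a \in t) && (b \in t)) path_triples <= 2))
  (iota 0 7)) (iota 0 7) by [].
move=> xy; rewrite count_map; under eq_count do rewrite /= subUset !sub1set !inE.
have x_in : (x : nat) \in iota 0 7 by rewrite mem_iota ltn_ord.
have y_in : (y : nat) \in iota 0 7 by rewrite mem_iota ltn_ord.
exact: implyP (allP (pairs_ok x x_in) y y_in) xy.
Qed.

Theorem lemma18 (M : {set {set 'I_7}}) :
  is_matching M ->
  exists S : {set 'I_7},
    [/\ stable M S, #|S| = 3 & [set w1; w7] :\: S != set0].
Proof.
move=> [card_e trivM].
have [_ /mapP [t t_tri ->] M_free] : exists2 S, S \in map (ordset 7) path_triples &
    forall e, e \in M -> ~~ (e \subset S).
  apply: (exists_unblocked (k := 2)) => [e /card_e/eqP/cards2P [x [y [xy ->]]]|].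
    exact: count_path_triples_above_pair.
  by have := card_matching card_e trivM; rewrite card_ord /=; lia.
exists (ordset 7 t); split.
- exact: stable_of_edge_free (path_triple_edge_free t_tri) M_free.
- exact: card_path_triple.
- exact: path_triple_misses_end.
Qed.
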